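(* Let $\mu_1,\mu_2$, $P_{n,m}$, the nearest neighbor recurrence coefficients $a_{n,m},b_{n,m},c_{n,m},d_{n,m}$ and the marginal recurrence coefficients $a_n^2(\mu_i),b_n(\mu_i)$ be as in the context, and suppose $c_{n,m}\neq d_{n,m}$ for all $n,m\ge 0$. Then the nearest neighbor recurrence coefficients can be computed recursively (by induction on $n+m$) from the relations \begin{align*} d_{n+1,m}-d_{n,m} &= c_{n,m+1}-c_{n,m}, && n,m\ge0,\\ a_{n+1,m}+b_{n+1,m}-(a_{n,m+1}+b_{n,m+1}) &= d_{n+1,m}c_{n,m}-d_{n,m}c_{n,m+1}, && n,m\ge 0,\\ \frac{a_{n,m+1}}{a_{n,m}} &= \frac{c_{n,m}-d_{n,m}}{c_{n-1,m}-d_{n-1,m}}, && n\ge1,\ m\ge0,\\ \frac{b_{n+1,m}}{b_{n,m}} &= \frac{c_{n,m}-d_{n,m}}{c_{n,m-1}-d_{n,m-1}}, && n\ge0,\ m\ge1, \end{align*} together with the boundary conditions $a_{n,0}=a_n^2(\mu_1)$, $b_{n,0}=0$, $c_{n,0}=b_n(\mu_1)$ for $n\ge0$ and $a_{0,m}=0$, $b_{0,m}=a_m^2(\mu_2)$, $d_{0,m}=b_m(\mu_2)$ for $m\ge0$; that is, these relations and boundary conditions determine all $a_{n,m},b_{n,m},c_{n,m},d_{n,m}$ ($n,m\ge0$) uniquely.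
   Context: Let $\mu_1,\mu_2$ be positive Borel measures on $\mathbb{R}$ with all moments finite, forming a normal system: for every $(n,m)\in\mathbb{N}^2$ there is a unique monic polynomial $P_{n,m}$ of degree $n+m$ with $\int x^kP_{n,m}\,d\mu_1=0$ for $0\le k\le n-1$ and $\int x^kP_{n,m}\,d\mu_2=0$ for $0\le k\le m-1$. Set $P_{n,m}=0$ if $n<0$ or $m<0$. The nearest neighbor recurrence coefficients are defined by \[ xP_{n,m}=P_{n+1,m}+c_{n,m}P_{n,m}+a_{n,m}P_{n-1,m}+b_{n,m}P_{n,m-1},\qquad xP_{n,m}=P_{n,m+1}+d_{n,m}P_{n,m}+a_{n,m}P_{n-1,m}+b_{n,m}P_{n,m-1}, \] with the convention $a_{0,m}=0$ and $b_{n,0}=0$ for the coefficients multiplying zero polynomials. For $i=1,2$, $P_n(x;\mu_i)$ are the monic orthogonal polynomials for $\mu_i$, satisfying $xP_n(x;\mu_i)=P_{n+1}(x;\mu_i)+b_n(\mu_i)P_n(x;\mu_i)+a_n^2(\mu_i)P_{n-1}(x;\mu_i)$ for $n\ge0$, with $P_0=1$, $P_{-1}=0$ and $a_0^2(\mu_i)=0$. (Thus $P_{n,0}=P_n(\cdot;\mu_1)$ and $P_{0,m}=P_m(\cdot;\mu_2)$.) The four displayed relations in the claim are known to hold for the nearest neighbor recurrence coefficients. *)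

From mathcomp Require Import all_boot all_order all_algebra.
From mathcomp Require Import all_classical all_reals.
Set Implicit Arguments. Unset Strict Implicit. Unset Printing Implicit Defensive.
Import Order.TTheory GRing.Theory Num.Theory.
Local Open Scope ring_scope.

(* A family of nearest-neighbor coefficients (a, b, c, d), indexed by (n, m),
   satisfies the four nearest-neighbor relations (ratio relations written in
   cross-multiplied form) and the boundary conditions determined by the
   marginal recurrence coefficients a1 = a_n^2(mu1), b1 = b_n(mu1),
   a2 = a_m^2(mu2), b2 = b_m(mu2). *)
Definition nn_relations (R : realType) (a b c d : nat -> nat -> R) : Prop :=
  [/\ (forall n m : nat, d n.+1 m - d n m = c n m.+1 - c n m),
      (forall n m : nat, a n.+1 m + b n.+1 m - (a n m.+1 + b n m.+1)
                         = d n.+1 m * c n m - d n m * c n m.+1),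
      (forall n m : nat, (1 <= n)%N ->
         a n m.+1 * (c n.-1 m - d n.-1 m) = a n m * (c n m - d n m)) &
      (forall n m : nat, (1 <= m)%N ->
         b n.+1 m * (c n m.-1 - d n m.-1) = b n m * (c n m - d n m))].

Definition nn_boundary (R : realType) (a1 b1 a2 b2 : nat -> R)
  (a b c d : nat -> nat -> R) : Prop :=
  [/\ (forall n : nat, a n 0%N = a1 n /\ b n 0%N = 0 /\ c n 0%N = b1 n) &
      (forall m : nat, a 0%N m = 0 /\ b 0%N m = a2 m /\ d 0%N m = b2 m)].

From mathcomp Require Import all_boot all_order all_algebra.
From mathcomp Require Import all_classical all_reals.
From mathcomp Require Import ring zify.
Import Order.TTheory GRing.Theory Num.Theory.
Set Implicit Arguments.
Unset Strict Implicit.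
Unset Printing Implicit Defensive.

Local Open Scope ring_scope.

(* Off the boundary, the two ratio relations (with the nonzero
   denominator c_{n,m} - d_{n,m}) determine a_{n+1,m+1} and b_{n+1,m+1} from
   the previous anti-diagonals; once d_{n+1,m} is eliminated by the first
   relation, the second relation is affine in c_{n,m+1} with slope
   c_{n,m} - d_{n,m}, which determines c_{n,m+1}; finally the first relation
   gives d_{n+1,m}. *)

Lemma nn_d_succ (R : realType) (a b c d : nat -> nat -> R) (n m : nat) :
  nn_relations a b c d -> d n.+1 m = c n m.+1 - c n m + d n m.
Proof. by case=> rel1 _ _ _; rewrite -rel1 subrK. Qed.

Lemma nn_relation2_affine (R : realType) (a b c d : nat -> nat -> R) (n m : nat) :
  nn_relations a b c d ->
  a n.+1 m + b n.+1 m - (a n m.+1 + b n m.+1)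
    = c n m.+1 * (c n m - d n m) + c n m * (d n m - c n m).
Proof.
move=> rel; have [_ rel2 _ _] := rel.
by rewrite rel2 (nn_d_succ _ _ rel); ring.
Qed.

Section Uniqueness.

Variables (R : realType) (a1 b1 a2 b2 : nat -> R).
Variables (a b c d a' b' c' d' : nat -> nat -> R).
Hypotheses (rel : nn_relations a b c d) (rel' : nn_relations a' b' c' d').
Hypotheses (bd : nn_boundary a1 b1 a2 b2 a b c d)
           (bd' : nn_boundary a1 b1 a2 b2 a' b' c' d').
Hypothesis c_neq_d : forall n m : nat, c n m != d n m.

Let agree n m :=
  [/\ a' n m = a n m, b' n m = b n m, c' n m = c n m & d' n m = d n m].

Let agree_upto K := forall n m : nat, (n + m <= K)%N -> agree n m.

Lemma nn_cd_diff_neq0 n m : c n m - d n m != 0.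
Proof. by rewrite subr_eq0. Qed.

Lemma nn_a_succ_eq n m : c' n m = c n m -> d' n m = d n m -> agree n.+1 m ->
  a' n.+1 m.+1 = a n.+1 m.+1.
Proof.
move=> ec ed [ea _ ec1 ed1]; have [_ _ rel3 _] := rel; have [_ _ rel3' _] := rel'.
apply: (mulIf (nn_cd_diff_neq0 n m)); rewrite -[in LHS]ec -[in LHS]ed.
by rewrite (rel3' n.+1 m erefl) (rel3 n.+1 m erefl) ea ec1 ed1.
Qed.

Lemma nn_b_succ_eq n m : c' n m = c n m -> d' n m = d n m -> agree n m.+1 ->
  b' n.+1 m.+1 = b n.+1 m.+1.
Proof.
move=> ec ed [_ eb ec1 ed1]; have [_ _ _ rel4] := rel; have [_ _ _ rel4'] := rel'.
apply: (mulIf (nn_cd_diff_neq0 n m)); rewrite -[in LHS]ec -[in LHS]ed.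
by rewrite (rel4' n m.+1 erefl) (rel4 n m.+1 erefl) eb ec1 ed1.
Qed.

Lemma nn_c_succ_eq n m : c' n m = c n m -> d' n m = d n m ->
  a' n.+1 m = a n.+1 m -> b' n.+1 m = b n.+1 m ->
  a' n m.+1 = a n m.+1 -> b' n m.+1 = b n m.+1 ->
  c' n m.+1 = c n m.+1.
Proof.
move=> ec ed ea1 eb1 ea2 eb2.
have := nn_relation2_affine n m rel'; rewrite ec ed ea1 eb1 ea2 eb2.
by rewrite (nn_relation2_affine n m rel) => /addIr /(mulIf (nn_cd_diff_neq0 n m)).
Qed.

Lemma nn_d_succ_eq n m : c' n m = c n m -> d' n m = d n m ->
  c' n m.+1 = c n m.+1 -> d' n.+1 m = d n.+1 m.
Proof.
move=> ec ed ec1.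
by rewrite (nn_d_succ _ _ rel) (nn_d_succ _ _ rel') ec ed ec1.
Qed.

Lemma nn_agree_row0 n : [/\ a' n 0 = a n 0, b' n 0 = b n 0 & c' n 0 = c n 0].
Proof.
have [row _] := bd; have [row' _] := bd'.
by have [-> [-> ->]] := row n; have [-> [-> ->]] := row' n.
Qed.

Lemma nn_agree_col0 m : [/\ a' 0 m = a 0 m, b' 0 m = b 0 m & d' 0 m = d 0 m].
Proof.
have [_ col] := bd; have [_ col'] := bd'.
by have [-> [-> ->]] := col m; have [-> [-> ->]] := col' m.
Qed.

Lemma nn_agree_diag0 : agree_upto 0.
Proof.
move=> n m; rewrite leqn0 addn_eq0 => /andP[/eqP -> /eqP ->].
by have [ea eb ec] := nn_agree_row0 0; have [_ _ ed] := nn_agree_col0 0.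
Qed.

Section Step.

Variable K : nat.
Hypothesis IH : agree_upto K.

Lemma nn_a_agree_diag_succ n m : (n + m <= K.+1)%N -> a' n m = a n m.
Proof.
case: n => [|n] le_nmK; first by case: (nn_agree_col0 m).
case: m le_nmK => [|m] le_nmK; first by case: (nn_agree_row0 n.+1).
have [_ _ ec ed] : agree n m by apply: IH; lia.
by apply: nn_a_succ_eq => //; apply: IH; lia.
Qed.

Lemma nn_b_agree_diag_succ n m : (n + m <= K.+1)%N -> b' n m = b n m.
Proof.
case: n => [|n] le_nmK; first by case: (nn_agree_col0 m).
case: m le_nmK => [|m] le_nmK; first by case: (nn_agree_row0 n.+1).
have [_ _ ec ed] : agree n m by apply: IH; lia.
by apply: nn_b_succ_eq => //; apply: IH; lia.
Qed.

Lemma nn_c_agree_diag_succ n m : (n + m <= K.+1)%N -> c' n m = c n m.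
Proof.
case: m => [|m] le_nmK; first by case: (nn_agree_row0 n).
have [_ _ ec ed] : agree n m by apply: IH; lia.
by apply: nn_c_succ_eq => //; [apply: nn_a_agree_diag_succ|apply: nn_b_agree_diag_succ
  |apply: nn_a_agree_diag_succ|apply: nn_b_agree_diag_succ]; lia.
Qed.

Lemma nn_d_agree_diag_succ n m : (n + m <= K.+1)%N -> d' n m = d n m.
Proof.
case: n => [|n] le_nmK; first by case: (nn_agree_col0 m).
have [_ _ ec ed] : agree n m by apply: IH; lia.
by apply: nn_d_succ_eq => //; apply: nn_c_agree_diag_succ; lia.
Qed.

Lemma nn_agree_diag_succ : agree_upto K.+1.
Proof.
move=> n m le_nmK; split;
  [exact: nn_a_agree_diag_succ|exact: nn_b_agree_diag_succ|exact: nn_c_agree_diag_succ|exact: nn_d_agree_diag_succ].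
Qed.

End Step.

Lemma nn_agree_everywhere n m : agree n m.
Proof.
have all_K : forall K, agree_upto K.
  by elim=> [|K IH]; [exact: nn_agree_diag0 | exact: nn_agree_diag_succ].
exact: all_K (n + m)%N n m (leqnn _).
Qed.

Lemma nn_coefficients_unique : [/\ a' = a, b' = b, c' = c & d' = d].
Proof.
by split; apply/funext=> n; apply/funext=> m; case: (nn_agree_everywhere n m).
Qed.

End Uniqueness.

(* The hypotheses a1 0 = 0 and a2 0 = 0 only make the boundary data
   consistent at (0, 0); uniqueness does not need them. *)
Theorem theorem3p1 (R : realType) (a1 b1 a2 b2 : nat -> R)
  (a b c d : nat -> nat -> R) :
  a1 0%N = 0 -> a2 0%N = 0 ->
  nn_relations a b c d -> nn_boundary a1 b1 a2 b2 a b c d ->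
  (forall n m : nat, c n m != d n m) ->
  forall a' b' c' d' : nat -> nat -> R,
    nn_relations a' b' c' d' -> nn_boundary a1 b1 a2 b2 a' b' c' d' ->
    [/\ a' = a, b' = b, c' = c & d' = d].
Proof.
move=> _ _ rel bd c_neq_d a' b' c' d' rel' bd'.
exact: nn_coefficients_unique rel rel' bd bd' c_neq_d.
Qed.
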